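(* For every epitopological space $X$, $R_1\pi_0^{\mathrm{ps}}X=\pi_0^{\mathrm{epi}}X$; and for every topological space $X$ (regarded as an epitopological space), $R_2\pi_0^{\mathrm{epi}}X=\pi_0^{\mathrm{top}}X$. That is, $R_1\circ\pi_0^{\mathrm{ps}}$ restricted to $\mathsf{EpiTop}$ equals $\pi_0^{\mathrm{epi}}$, and $R_2\circ\pi_0^{\mathrm{epi}}$ restricted to $\mathsf{Top}$ equals $\pi_0^{\mathrm{top}}$.
   Context: For a set $X$, $U(X)$ is the set of ultrafilters on $X$, $\dot x$ the principal ultrafilter at $x$; for $f\colon X\to Y$, $f_*\mathscr F=\{S\subset Y:f^{-1}(S)\in\mathscr F\}$. A pseudotopological space is a set $X$ with a relation $u\subset U(X)\times X$ containing all $(\dot x,x)$; write $\mathscr U\to x$; for a filter $\mathscr F$, $\mathscr F\to x$ means every ultrafilter containing $\mathscr F$ converges to $x$. Continuous maps: $\mathscr U\to x\Rightarrow f_*\mathscr U\to f(x)$ (category $\mathsf{PsTop}$). Initial structure for maps $f_j\colon X\to X_j$: $\mathscr U\to x$ iff $(f_j)_*\mathscr U\to f_j(x)$ for all $j$. Final structure for a map $q\colon X\to Z$: $\mathscr U\to z$ iff $\mathscr U=\dot z$ or $\mathscr U=q_*\mathscr V$, $z=q(x)$ for some $\mathscr V\to x$ in $X$. Topological spaces are regarded as pseudotopological spaces via ultrafilter convergence (giving the full subcategory $\mathsf{Top}$). For pseudotopological $X,Y$, $Y^X$ is the set of continuous maps with: a filter $\mathscr F\to f$ iff for every filter $\mathscr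 G\to x$ in $X$, $\mathrm{ev}_*(\mathscr F\times\mathscr G)\to f(x)$. A pseudotopological space is epitopological if its structure is initial w.r.t. some family of maps $X\to Z_j^{Y_j}$ with $Y_j,Z_j$ topological; these form the full subcategory $\mathsf{EpiTop}$. For a pseudotopological space $X$, $R_1X$ is the epitopological space on the same set whose structure is the smallest epitopological structure containing that of $X$ (the concrete reflection into $\mathsf{EpiTop}$). For a pseudotopological space $X$, $RX$ is the topological space on the same set in which $S$ is open iff $S\in\mathscr U$ whenever $\mathscr U\to x\in S$; $R_2$ is $R$ restricted to epitopological spaces. A path is a continuous map from $[0,1]$. $\pi_0^{\mathrm{ps}}X$: set of path components of a pseudotopological space $X$ with the final pseudotopology w.r.t. the projection. $\pi_0^{\mathrm{epi}}X$: set of path components of an epitopological space $X$ with the smallest epitopological structure making the projection continuous. $\pi_0^{\mathrm{top}}X$: set of path components of a topological space with the quotient topology. *)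

(* self-contained development of pseudotopological spaces
   via ultrafilter convergence. Sets are predicates T -> Prop; a "family"
   (candidate filter) on T is a predicate on sets. *)
From Stdlib Require Import Reals.

Definition fam (T : Type) := (T -> Prop) -> Prop.

Definition principal {T : Type} (x : T) : fam T := fun S => S x.

Definition push {T T' : Type} (f : T -> T') (F : fam T) : fam T' :=
  fun S => F (fun x => S (f x)).

Definition is_filter {T : Type} (F : fam T) : Prop :=
  F (fun _ => True) /\ ~ F (fun _ => False) /\
  (forall A B : T -> Prop, F A -> F B -> F (fun x => A x /\ B x)) /\
  (forall A B : T -> Prop, (forall x, A x -> B x) -> F A -> F B).

Definition is_ultra {T : Type} (U : fam T) : Prop :=
  is_filter U /\ forall S : T -> Prop, U S \/ U (fun x => ~ S x).

Definition subfam {T : Type} (F G : fam T) : Prop := forall S, F S -> G S.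
Definition fam_eq {T : Type} (F G : fam T) : Prop := forall S, F S <-> G S.

(* a pseudotopological structure: a convergence relation between
   ultrafilters and points (only its values on ultrafilters matter) *)
Definition ps_struct (T : Type) := fam T -> T -> Prop.
Definition is_pstop {T : Type} (c : ps_struct T) : Prop :=
  forall x, c (principal x) x.

Record PsTop := { pcar :> Type; pconv : ps_struct pcar; pconv_pt : is_pstop pconv }.

Definition filt_conv {T : Type} (c : ps_struct T) (G : fam T) (x : T) : Prop :=
  forall U, is_ultra U -> subfam G U -> c U x.

Definition ps_cont {T T' : Type} (c : ps_struct T) (c' : ps_struct T') (f : T -> T') : Prop :=
  forall U x, is_ultra U -> c U x -> c' (push f U) (f x).

Definition struct_le {T : Type} (c c' : ps_struct T) : Prop :=
  forall U x, is_ultra U -> c U x -> c' U x.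
Definition struct_eq {T : Type} (c c' : ps_struct T) : Prop :=
  struct_le c c' /\ struct_le c' c.

Record Top := {
  tcar :> Type;
  topen : (tcar -> Prop) -> Prop;
  topen_full : topen (fun _ => True);
  topen_inter : forall A B, topen A -> topen B -> topen (fun x => A x /\ B x);
  topen_union : forall F : (tcar -> Prop) -> Prop, (forall S, F S -> topen S) ->
                  topen (fun x => exists S, F S /\ S x) }.

Definition top_conv {T : Type} (op : (T -> Prop) -> Prop) : ps_struct T :=
  fun U x => forall S, op S -> S x -> U S.

Definition ps_of_top (X : Top) : PsTop :=
  {| pcar := tcar X; pconv := top_conv (topen X);
     pconv_pt := fun x S _ Sx => Sx |}.

(* Z^Y for topological Y, Z: continuous maps with the continuous convergence *)
Definition cmap (Y Z : Top) : Type :=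
  {g : tcar Y -> tcar Z | ps_cont (top_conv (topen Y)) (top_conv (topen Z)) g}.

Definition ev {Y Z : Top} (p : cmap Y Z * tcar Y) : tcar Z := proj1_sig (fst p) (snd p).

Definition prod_fam {A B : Type} (F : fam A) (G : fam B) : fam (A * B) :=
  fun S => exists (P : A -> Prop) (Q : B -> Prop), F P /\ G Q /\
             forall a b, P a -> Q b -> S (a, b).

Definition fun_conv (Y Z : Top) : ps_struct (cmap Y Z) :=
  fun F g => forall (G : fam (tcar Y)) (y : tcar Y), is_filter G ->
    filt_conv (top_conv (topen Y)) G y ->
    filt_conv (top_conv (topen Z)) (push ev (prod_fam F G)) (proj1_sig g y).

(* epitopological: initial w.r.t. some family X -> Z_j^{Y_j}, Y_j, Z_j topological *)
Definition is_epitop {T : Type} (c : ps_struct T) : Prop :=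
  exists (J : Type) (Y Z : J -> Top) (f : forall j, T -> cmap (Y j) (Z j)),
    forall U x, is_ultra U ->
      (c U x <-> forall j, fun_conv (Y j) (Z j) (push (f j) U) (f j x)).

Definition R1 {T : Type} (c : ps_struct T) : ps_struct T :=
  fun U x => forall c' : ps_struct T, is_pstop c' -> is_epitop c' ->
                struct_le c c' -> c' U x.

Definition R_open {T : Type} (c : ps_struct T) : (T -> Prop) -> Prop :=
  fun S => forall U x, is_ultra U -> c U x -> S x -> U S.

Definition unitI : Type := {r : R | (0 <= r <= 1)%R}.

Lemma unitI0_pf : (0 <= 0 <= 1)%R.
Proof. split; [apply Rle_refl | apply Rle_0_1]. Qed.
Lemma unitI1_pf : (0 <= 1 <= 1)%R.
Proof. split; [apply Rle_0_1 | apply Rle_refl]. Qed.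

Definition I0 : unitI := exist _ 0%R unitI0_pf.
Definition I1 : unitI := exist _ 1%R unitI1_pf.

Definition convI : ps_struct unitI :=
  fun U t => forall eps : R, (0 < eps)%R ->
    U (fun s => (Rabs (proj1_sig s - proj1_sig t) < eps)%R).

Definition path_rel (X : PsTop) (x y : pcar X) : Prop :=
  exists p : unitI -> pcar X, ps_cont convI (pconv X) p /\ p I0 = x /\ p I1 = y.

Definition pc (X : PsTop) : Type :=
  {S : pcar X -> Prop | exists x, S = path_rel X x}.

Definition pq (X : PsTop) (x : pcar X) : pc X :=
  exist _ (path_rel X x) (ex_intro _ x eq_refl).

(* pi_0^ps: final pseudotopology w.r.t. the projection *)
Definition pi0_ps (X : PsTop) : ps_struct (pc X) :=
  fun U z => fam_eq U (principal z) \/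
    exists (V : fam (pcar X)) (x : pcar X),
      is_ultra V /\ pconv X V x /\ fam_eq U (push (pq X) V) /\ z = pq X x.

Definition pi0_epi (X : PsTop) : ps_struct (pc X) :=
  fun U z => forall c' : ps_struct (pc X), is_pstop c' -> is_epitop c' ->
    ps_cont (pconv X) c' (pq X) -> c' U z.

Definition pi0_top_open (X : Top) : (pc (ps_of_top X) -> Prop) -> Prop :=
  fun S => topen X (fun x => S (pq (ps_of_top X) x)).

(* Both π0-structures are characterised by continuity of the projection q:
   a pseudotopology on the path components contains the final structure of q
   iff q is continuous into it, so the smallest epitopological structure above
   π0^ps is the smallest one making q continuous, namely π0^epi.
   For a topological X, the quotient topology is epitopological (constant maps
   embed a space into its function spaces) and makes q continuous, so every
   quotient-open set is R-open for π0^epi.  Conversely, an R-open set for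
   π0^epi pulls back along the continuous q to an R-open set of X, and a
   topology is recovered from its ultrafilter convergence: a point of the
   closure of a set is the limit of an ultrafilter containing that set. *)
From mathcomp Require filter.
From Stdlib Require Import FunctionalExtensionality PropExtensionality Classical.

Lemma fam_eq_eq {T : Type} (F G : fam T) : fam_eq F G -> F = G.
Proof.
intro H. apply functional_extensionality; intro S.
apply propositional_extensionality, H.
Qed.

Lemma ultrafilter_ext {T : Type} (F : fam T) :
  is_filter F -> exists U, is_ultra U /\ subfam F U.
Proof.
intros (HT & H0 & HI & HS).
assert (PF : filter.ProperFilter F).
{ constructor; [exact H0 | constructor; [exact HT | exact HI | exact HS]]. }
destruct (filter.ultraFilterLemma PF) as (U & HU & HFU).
exists U; split; [|exact HFU].
destruct (@filter.ultra_proper _ _ HU) as [HU0 [HUT HUI HUS]].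
repeat split; auto.
intro S; exact (filter.in_ultra_setVsetC S HU).
Qed.

Lemma push_ultra {T T' : Type} (f : T -> T') (U : fam T) :
  is_ultra U -> is_ultra (push f U).
Proof.
intros [(HT & H0 & HI & HS) HU].
split; [split; [exact HT | split; [exact H0 | split]] |].
- intros A B; apply HI.
- intros A B HAB; apply HS; intro x; apply HAB.
- intro S; apply (HU (fun x => S (f x))).
Qed.

Lemma topen_ext (T : Top) (A B : tcar T -> Prop) :
  (forall x, A x <-> B x) -> topen T A -> topen T B.
Proof.
intro HAB.
replace B with A; [easy|].
apply functional_extensionality; intro x; apply propositional_extensionality, HAB.
Qed.

Lemma topen_of_nbhd (T : Top) (A : tcar T -> Prop) :
  (forall x, A x -> exists O, topen T O /\ O x /\ forall y, O y -> A y) ->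
  topen T A.
Proof.
intro Hnbhd.
apply (topen_ext T (fun x => exists O, (topen T O /\ forall y, O y -> A y) /\ O x)).
- intro x; split.
  + intros (O & (_ & HOA) & Ox). exact (HOA x Ox).
  + intro Ax. destruct (Hnbhd x Ax) as (O & HO & Ox & HOA). now exists O.
- apply topen_union. now intros O [HO _].
Qed.

Lemma top_conv_pstop {T : Type} (op : (T -> Prop) -> Prop) : is_pstop (top_conv op).
Proof. intros x S _ Sx. exact Sx. Qed.

Definition final_top (X : Top) {T : Type} (q : tcar X -> T) : Top.
Proof.
refine {| tcar := T; topen := fun S => topen X (fun x => S (q x)) |}.
- apply topen_full.
- intros A B; apply topen_inter.
- intros F HF.
  apply (topen_ext X
    (fun x => exists O, (exists S, F S /\ O = fun x' => S (q x')) /\ O x)).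
  + intro x; split.
    * intros (O & (S & HS & ->) & Sx). now exists S.
    * intros (S & HS & Sx). exists (fun x' => S (q x')). split; auto. now exists S.
  + apply topen_union. intros O (S & HS & ->). exact (HF S HS).
Defined.

Lemma final_top_cont (X : Top) {T : Type} (q : tcar X -> T) :
  ps_cont (top_conv (topen X)) (top_conv (topen (final_top X q))) q.
Proof. intros U x _ Hc S HS Sx. exact (Hc _ HS Sx). Qed.

Lemma closure_ultra_conv (T : Top) (B : tcar T -> Prop) (x : tcar T) :
  (forall O, topen T O -> O x -> exists y, O y /\ B y) ->
  exists U, is_ultra U /\ top_conv (topen T) U x /\ U B.
Proof.
intro Hcl.
set (G := fun C : tcar T -> Prop =>
  exists O, topen T O /\ O x /\ forall y, O y -> B y -> C y).
assert (HG : is_filter G).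
{ repeat split.
  - exists (fun _ => True). repeat split; auto. apply topen_full.
  - intros (O & HO & Ox & HOB).
    destruct (Hcl O HO Ox) as (y & Oy & By). exact (HOB y Oy By).
  - intros C1 C2 (O1 & HO1 & O1x & HO1C) (O2 & HO2 & O2x & HO2C).
    exists (fun y => O1 y /\ O2 y).
    repeat split; try apply topen_inter; firstorder.
  - intros C1 C2 HC (O & HO & Ox & HOC). exists O. repeat split; auto. }
destruct (ultrafilter_ext G HG) as (U & HU & HGU).
exists U. split; [exact HU | split].
- intros O HO Ox. apply HGU. exists O. repeat split; auto.
- apply HGU. exists (fun _ => True). repeat split; auto. apply topen_full.
Qed.

Lemma R_open_top_conv (T : Top) (S : tcar T -> Prop) :
  R_open (top_conv (topen T)) S <-> topen T S.
Proof.
split.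
- intro HR. apply topen_of_nbhd. intros x Sx.
  apply NNPP; intro Hno.
  assert (Hcl : forall O, topen T O -> O x -> exists y, O y /\ ~ S y).
  { intros O HO Ox. apply NNPP; intro Hsub. apply Hno.
    exists O. repeat split; auto.
    intros y Oy. apply NNPP; intro nSy. apply Hsub. now exists y. }
  destruct (closure_ultra_conv T _ x Hcl) as (U & HU & HUx & HUnS).
  pose proof (HR U x HU HUx Sx) as HUS.
  destruct HU as [(_ & H0 & HI & HS) _].
  apply H0. apply (HS _ _ (fun y Hy => proj2 Hy (proj1 Hy)) (HI _ _ HUS HUnS)).
- intros HS U x _ HUx Sx. exact (HUx S HS Sx).
Qed.

Lemma R_open_comap {T T' : Type} (c : ps_struct T) (c' : ps_struct T')
    (f : T -> T') (S : T' -> Prop) :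
  ps_cont c c' f -> R_open c' S -> R_open c (fun x => S (f x)).
Proof.
intros Hf HS U x HU Hc Sx.
exact (HS (push f U) (f x) (push_ultra f U HU) (Hf U x HU Hc) Sx).
Qed.

Lemma R_open_le {T : Type} (c c' : ps_struct T) (S : T -> Prop) :
  struct_le c c' -> R_open c' S -> R_open c S.
Proof. intros Hle HS U x HU Hc. exact (HS U x HU (Hle U x HU Hc)). Qed.

Definition const_cmap (Y Z : Top) (z : tcar Z) : cmap Y Z.
Proof.
exists (fun _ => z).
intros U y [(HT & _ & _ & HS) _] _ S _ Sz.
exact (HS (fun _ => True) _ (fun _ _ => Sz) HT).
Defined.

Lemma fun_conv_const (Y Z : Top) (y : tcar Y) (U : fam (tcar Z)) (z : tcar Z) :
  is_ultra U ->
  (fun_conv Y Z (push (const_cmap Y Z) U) (const_cmap Y Z z) <->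
   top_conv (topen Z) U z).
Proof.
intro HU. split.
- intro Hc.
  assert (Hpt : is_filter (principal y)) by (cbv [is_filter principal]; firstorder).
  assert (Hpty : filt_conv (top_conv (topen Y)) (principal y) y).
  { intros W _ HW S _ Sy. exact (HW S Sy). }
  apply (Hc _ y Hpt Hpty U HU).
  intros S (P & Q & HP & HQ & HPQ).
  destruct HU as [(_ & _ & _ & HS) _].
  exact (HS _ _ (fun z' Pz' => HPQ _ y Pz' HQ) HP).
- intros Hc G y' [HGT _] _ W _ HW S HS Sz.
  apply HW. exists (fun g => forall b, S (proj1_sig g b)), (fun _ => True).
  split; [|split; [exact HGT | intros g b Hg _; exact (Hg b)]].
  destruct HU as [(_ & _ & _ & HUS) _].
  exact (HUS S _ (fun z' Sz' _ => Sz') (Hc S HS Sz)).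
Qed.

(* T is initial for the constant maps into T^T; the family is indexed by the
   points of T so that the copy indexed by y can be tested by evaluation at y. *)
Lemma top_conv_epitop (T : Top) : is_epitop (top_conv (topen T)).
Proof.
exists (tcar T), (fun _ => T), (fun _ => T), (fun _ => const_cmap T T).
intros U z HU. split.
- intros Hc y. exact (proj2 (fun_conv_const T T y U z HU) Hc).
- intro Hc. exact (proj1 (fun_conv_const T T z U z HU) (Hc z)).
Qed.

Lemma pi0_ps_le_iff_cont (X : PsTop) (c : ps_struct (pc X)) :
  is_pstop c -> (struct_le (pi0_ps X) c <-> ps_cont (pconv X) c (pq X)).
Proof.
intro Hc. split.
- intros Hle V x HV HVx. apply Hle; [now apply push_ultra|].
  right. exists V, x. split; [exact HV | split; [exact HVx | split; [now intro | reflexivity]]].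
- intros Hq U z HU [Hz | (V & x & HV & HVx & HUV & ->)].
  + rewrite (fam_eq_eq _ _ Hz). apply Hc.
  + rewrite (fam_eq_eq _ _ HUV). exact (Hq V x HV HVx).
Qed.

Lemma R1_pi0_ps (X : PsTop) : struct_eq (R1 (pi0_ps X)) (pi0_epi X).
Proof.
split; intros U z _ Hz c Hc Hepi Hq; apply Hz; auto; now apply pi0_ps_le_iff_cont.
Qed.

Lemma pq_cont_pi0_epi (X : PsTop) : ps_cont (pconv X) (pi0_epi X) (pq X).
Proof. intros V x HV HVx c _ _ Hq. exact (Hq V x HV HVx). Qed.

Theorem proposition4p3 :
  (forall X : PsTop, is_epitop (pconv X) ->
     struct_eq (R1 (pi0_ps X)) (pi0_epi X)) /\
  (forall (X : Top) (S : pc (ps_of_top X) -> Prop),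
     R_open (pi0_epi (ps_of_top X)) S <-> pi0_top_open X S).
Proof.
split.
- intros X _. apply R1_pi0_ps.
- intros X S. set (Q := final_top X (pq (ps_of_top X))).
  assert (Hle : struct_le (pi0_epi (ps_of_top X)) (top_conv (topen Q))).
  { intros U z _ Hz. apply Hz.
    - apply top_conv_pstop.
    - exact (top_conv_epitop Q).
    - apply final_top_cont. }
  split.
  + intro HR. apply (R_open_top_conv X).
    exact (R_open_comap _ _ _ S (pq_cont_pi0_epi (ps_of_top X)) HR).
  + intro HS. apply (R_open_le _ _ S Hle).
    exact (proj2 (R_open_top_conv Q S) HS).
Qed.
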